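(* Let $L>0$ be fixed and let the constant renormalized force be $F=cN^{\gamma}$ with $c>0$, $\gamma>1$. Then the normalized counting measures of the fixed points, $\mu_N=\frac1N\sum_{i=0}^{N}\delta_{x_i}$ (Dirac masses at the particle positions), converge as $N\to\infty$ in the sense of distributions (weakly) to the Dirac delta measure at $0$.
   Context: A configuration consists of $N+1$ point particles $-L\le x_N<\dots<x_1<x_0\le 0$ on $[-L,0]$ with potential energy $U=\sum_{i=1}^{N}\frac{\alpha_{int}}{x_{i-1}-x_i}-\sum_{i=0}^{N}\int_{-L}^{x_i}\alpha_{ext}F_0\,dx$, $\alpha_{int},\alpha_{ext}>0$, with constant $F_0>0$; the renormalized force is the constant $F=\frac{\alpha_{ext}}{\alpha_{int}}F_0$, which may depend on $N$ (the external force pushes particles towards $0$). Write $\delta_k=x_{k-1}-x_k$, $f_k=\delta_k^{-2}$. The walls at $0,-L$ are completely inelastic. A fixed point is a configuration with $x_0=0$, $f_{k+1}+F=f_k$ for $k=1,\dots,N-1$, and either $x_N=-L$ with $f_N\ge F$, or $x_N>-L$ with $f_N=F$; it exists and is unique. *)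

From Stdlib Require Import Reals Lra Lia.
Open Scope R_scope.

Definition gap (x : nat -> R) (k : nat) : R := x (k - 1)%nat - x k.
Definition fcoef (x : nat -> R) (k : nat) : R := / (gap x k ^ 2).

(* x : nat -> R gives positions x_0, ..., x_N (values beyond N irrelevant).
   Fixed point with N+1 particles on [-L,0], renormalized force F. *)
Definition is_fixed_point (L F : R) (N : nat) (x : nat -> R) : Prop :=
  x 0%nat = 0 /\
  (forall k : nat, (k < N)%nat -> x (S k) < x k) /\
  -L <= x N /\
  (forall k : nat, (1 <= k)%nat -> (k <= N - 1)%nat ->
      fcoef x (S k) + F = fcoef x k) /\
  ((x N = -L /\ fcoef x N >= F) \/ (-L < x N /\ fcoef x N = F)).

Definition emp_measure (N : nat) (x : nat -> R) (phi : R -> R) : R :=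
  / INR N * sum_f_R0 (fun i => phi (x i)) N.

(* By the recursion f_k = f_(k+1) + F and f_N >= F, the coefficient
   f_(N-m), m steps from the left end, is at least (m+1) F, so the gap
   delta_(N-m) is at most 1 / sqrt ((m+1) F).  Summing, every |x_i| is at most
   (1/sqrt F) sum_(k<=N) 1/sqrt k <= 2 sqrt (N/F) = 2 sqrt (N^(1-gamma)/c),
   which tends to 0 uniformly in i when gamma > 1.  A continuous test function
   then takes values uniformly close to phi 0 at all N+1 particles, and the
   normalisation 1/N instead of 1/(N+1) only costs phi 0 / N. *)

From Stdlib Require Import Reals Lra Lia Psatz.
Open Scope R_scope.

Lemma le_inv_sqrt_of_inv_sq_ge g a : 0 < g -> 0 < a -> a <= / g ^ 2 -> g <= / sqrt a.
Proof.
  intros Hg Ha Hga.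
  assert (Hg2 : g ^ 2 <= / a).
  { rewrite <- (Rinv_inv (g ^ 2)). apply Rinv_le_contravar; [lra|]. exact Hga. }
  rewrite <- sqrt_inv, <- (sqrt_pow2 g) by lra.
  apply sqrt_le_1; [apply pow2_ge_0 | left; apply Rinv_0_lt_compat | ]; lra.
Qed.

Lemma inv_sqrt_le_sqrt_diff m : 1 <= m -> / sqrt m <= 2 * (sqrt m - sqrt (m - 1)).
Proof.
  intros Hm.
  assert (Ha : 0 < sqrt m) by (apply sqrt_lt_R0; lra).
  assert (Hb : 0 <= sqrt (m - 1)) by apply sqrt_pos.
  assert (Ha2 : sqrt m * sqrt m = m) by (apply sqrt_sqrt; lra).
  assert (Hb2 : sqrt (m - 1) * sqrt (m - 1) = m - 1) by (apply sqrt_sqrt; lra).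
  (* sqrt (m-1) <= sqrt m and (sqrt m)^2 - (sqrt (m-1))^2 = 1 *)
  assert (H1 : 1 <= 2 * sqrt m * (sqrt m - sqrt (m - 1))) by nra.
  apply (Rmult_le_reg_l (sqrt m)); auto.
  rewrite Rinv_r; lra.
Qed.

Section FixedPoint.

Variables (L F : R) (N : nat) (x : nat -> R).
Hypothesis fixed_x : is_fixed_point L F N x.

Lemma fixed_point_fcoef_ge m : (m < N)%nat -> fcoef x (N - m) >= F * INR (S m).
Proof.
  destruct fixed_x as [_ [_ [_ [Hrec Hend]]]].
  induction m as [|m IH]; intros Hm.
  - replace (N - 0)%nat with N by lia. simpl INR.
    destruct Hend as [[_ H]|[_ H]]; lra.
  - assert (Hk := Hrec (N - S m)%nat ltac:(lia) ltac:(lia)).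
    replace (S (N - S m)) with (N - m)%nat in Hk by lia.
    specialize (IH ltac:(lia)). rewrite S_INR. lra.
Qed.

Hypothesis F_gt0 : 0 < F.

Lemma fixed_point_gap_le i : (i < N)%nat ->
  gap x (S i) <= 2 / sqrt F * (sqrt (INR (N - i)) - sqrt (INR (N - S i))).
Proof.
  intros Hi.
  pose proof fixed_x as [_ [Hdec _]].
  assert (Hf := fixed_point_fcoef_ge (N - S i) ltac:(lia)).
  replace (N - (N - S i))%nat with (S i) in Hf by lia.
  replace (S (N - S i)) with (N - i)%nat in Hf by lia.
  set (m := INR (N - i)) in *.
  assert (Hm : INR (N - S i) = m - 1).
  { unfold m. replace (N - i)%nat with (S (N - S i)) by lia. rewrite S_INR. lra. }
  assert (Hm1 : 1 <= m) by (pose proof (pos_INR (N - S i)); lra).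
  assert (HsF : 0 < sqrt F) by (apply sqrt_lt_R0; lra).
  assert (Hgap : gap x (S i) <= / sqrt F * / sqrt m).
  { rewrite <- Rinv_mult, <- sqrt_mult by lra.
    apply le_inv_sqrt_of_inv_sq_ge; [| nra | apply Rge_le, Hf].
    unfold gap. replace (S i - 1)%nat with i by lia. specialize (Hdec i Hi). lra. }
  rewrite Hm.
  replace (2 / sqrt F * (sqrt m - sqrt (m - 1)))
    with (/ sqrt F * (2 * (sqrt m - sqrt (m - 1)))) by (field; lra).
  eapply Rle_trans; [exact Hgap|].
  apply Rmult_le_compat_l; [left; apply Rinv_0_lt_compat; lra|].
  apply inv_sqrt_le_sqrt_diff; lra.
Qed.

Lemma fixed_point_opp_le i : (i <= N)%nat ->
  0 <= - x i <= 2 / sqrt F * (sqrt (INR N) - sqrt (INR (N - i))).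
Proof.
  pose proof fixed_x as [H0 [Hdec _]].
  induction i as [|i IH]; intros Hi.
  - rewrite H0, Nat.sub_0_r. lra.
  - specialize (IH ltac:(lia)).
    assert (Hg := fixed_point_gap_le i ltac:(lia)).
    unfold gap in Hg. replace (S i - 1)%nat with i in Hg by lia.
    specialize (Hdec i ltac:(lia)). lra.
Qed.

Lemma fixed_point_abs_le i : (i <= N)%nat -> Rabs (x i) <= 2 * sqrt (INR N / F).
Proof.
  intros Hi. destruct (fixed_point_opp_le i Hi) as [Hneg Hle].
  assert (HsF : 0 < sqrt F) by (apply sqrt_lt_R0; lra).
  assert (0 <= sqrt (INR (N - i))) by apply sqrt_pos.
  assert (0 <= 2 / sqrt F) by (unfold Rdiv; apply Rmult_le_pos; [lra | left; apply Rinv_0_lt_compat; lra]).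
  rewrite Rabs_left1, sqrt_div_alt by lra.
  replace (2 * (sqrt (INR N) / sqrt F)) with (2 / sqrt F * sqrt (INR N)) by (field; lra).
  nra.
Qed.

End FixedPoint.

Lemma Rpower_split_one (t gamma : R) : 0 < t ->
  Rpower t gamma = t * Rpower t (gamma - 1).
Proof.
  intros Ht. rewrite <- (Rpower_1 t) at 2 by exact Ht.
  rewrite <- Rpower_plus. f_equal. ring.
Qed.

Lemma Un_cv_INR_div_Rpower (c gamma : R) : 0 < c -> 1 < gamma ->
  Un_cv (fun N => INR N / (c * Rpower (INR N) gamma)) 0.
Proof.
  intros Hc Hg eps Heps.
  set (K := / (c * eps)).
  assert (HK : 0 < K) by (apply Rinv_0_lt_compat; nra).
  (* N^(gamma - 1) exceeds K as soon as N exceeds (K + 1)^(1/(gamma - 1)) *)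
  set (B := Rpower (K + 1) (/ (gamma - 1))).
  assert (HB : 0 < B) by apply exp_pos.
  destruct (INR_unbounded B) as [N0 HN0].
  exists N0. intros N HN. unfold R_dist. rewrite Rminus_0_r.
  assert (HBN : B <= INR N) by (apply le_INR in HN; lra).
  assert (HNpos : 0 < INR N) by lra.
  set (P := Rpower (INR N) (gamma - 1)).
  assert (HP : K + 1 <= P).
  { replace (K + 1) with (Rpower B (gamma - 1)).
    - apply Rle_Rpower_l; lra.
    - unfold B. rewrite Rpower_mult, Rinv_l, Rpower_1 by lra. reflexivity. }
  rewrite Rpower_split_one by exact HNpos. fold P.
  replace (INR N / (c * (INR N * P))) with (/ (c * P)) by (field; lra).
  rewrite Rabs_right by (left; apply Rinv_0_lt_compat; nra).
  replace eps with (/ (c * K)) by (unfold K; field; lra).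
  apply Rinv_lt_contravar.
  - apply Rmult_lt_0_compat; apply Rmult_lt_0_compat; lra.
  - apply Rmult_lt_compat_l; lra.
Qed.

Lemma Un_cv_scaled_sum (a : nat -> nat -> R) (l : R) :
  (forall eps, 0 < eps -> exists N0 : nat,
     forall N i, (N0 <= N)%nat -> (i <= N)%nat -> Rabs (a N i - l) < eps) ->
  Un_cv (fun N => / INR N * sum_f_R0 (a N) N) l.
Proof.
  intros Hunif eps Heps.
  destruct (Hunif (eps / 3) ltac:(lra)) as [N0 HN0].
  destruct (INR_unbounded (3 * Rabs l / eps)) as [N1 HN1].
  exists (S (N0 + N1)). intros N HN. unfold R_dist.
  assert (HN1' : 3 * Rabs l / eps < INR N)
    by (apply le_INR in HN; rewrite S_INR, plus_INR in HN; pose proof (pos_INR N0); lra).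
  assert (HNpos : 1 <= INR N) by (apply (le_INR 1); lia).
  assert (Hsum : Rabs (sum_f_R0 (fun i => a N i - l) N) <= (INR N + 1) * (eps / 3)).
  { eapply Rle_trans; [apply sum_f_R0_triangle|].
    eapply Rle_trans; [apply (sum_Rle _ (fun _ => eps / 3))|].
    - intros i Hi. left. apply HN0; lia.
    - rewrite sum_cte, S_INR. lra. }
  assert (Hsplit : / INR N * sum_f_R0 (a N) N - l
                   = / INR N * sum_f_R0 (fun i => a N i - l) N + l / INR N).
  { rewrite minus_sum, sum_cte, S_INR. field. lra. }
  rewrite Hsplit.
  eapply Rle_lt_trans; [apply Rabs_triang|].
  unfold Rdiv. rewrite !Rabs_mult, Rabs_inv, Rabs_right by lra.
  assert (Hmean : / INR N * Rabs (sum_f_R0 (fun i => a N i - l) N) <= 2 * (eps / 3)).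
  { apply (Rmult_le_reg_l (INR N)); [lra|].
    rewrite <- Rmult_assoc, Rinv_r by lra. nra. }
  assert (Hrest : Rabs l * / INR N < eps / 3).
  { apply (Rmult_lt_reg_l (INR N)); [lra|].
    replace (INR N * (Rabs l * / INR N)) with (Rabs l) by (field; lra).
    apply (Rmult_lt_compat_r (eps / 3)) in HN1'; [|lra].
    replace (3 * Rabs l / eps * (eps / 3)) with (Rabs l) in HN1' by (field; lra).
    lra. }
  lra.
Qed.

Lemma fixed_points_uniformly_small (L c gamma : R) (x : nat -> nat -> R) :
  0 < c -> 1 < gamma ->
  (forall N : nat, (1 <= N)%nat ->
     is_fixed_point L (c * Rpower (INR N) gamma) N (x N)) ->
  forall del, 0 < del -> exists N0 : nat,
    forall N i, (N0 <= N)%nat -> (i <= N)%nat -> Rabs (x N i) < del.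
Proof.
  intros Hc Hg Hfp del Hdel.
  destruct (Un_cv_INR_div_Rpower c gamma Hc Hg ((del / 2) ^ 2) ltac:(nra)) as [N0 HN0].
  exists (S N0). intros N i HN Hi.
  set (F := c * Rpower (INR N) gamma).
  assert (HF : 0 < F) by (apply Rmult_lt_0_compat; [lra | apply exp_pos]).
  assert (Hr : 0 <= INR N / F)
    by (unfold Rdiv; apply Rmult_le_pos; [apply pos_INR | left; apply Rinv_0_lt_compat; lra]).
  specialize (HN0 N ltac:(lia)). unfold R_dist in HN0. fold F in HN0.
  rewrite Rminus_0_r, Rabs_right in HN0 by lra.
  assert (Hsqrt : sqrt (INR N / F) < del / 2).
  { rewrite <- (sqrt_pow2 (del / 2)) by lra. apply sqrt_lt_1_alt; lra. }
  pose proof (fixed_point_abs_le L F N (x N) (Hfp N ltac:(lia)) HF i Hi). lra.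
Qed.

Theorem theorem2 :
  forall (L c gamma : R), 0 < L -> 0 < c -> 1 < gamma ->
  forall (x : nat -> nat -> R),
    (forall N : nat, (1 <= N)%nat ->
       is_fixed_point L (c * Rpower (INR N) gamma) N (x N)) ->
  forall phi : R -> R,
    continuity phi ->
    (exists M : R, forall t : R, Rabs (phi t) <= M) ->
    Un_cv (fun N : nat => emp_measure N (x N) phi) (phi 0).
Proof.
  intros L c gamma _ Hc Hg x Hfp phi Hcont _.
  apply (Un_cv_scaled_sum (fun N i => phi (x N i))).
  intros eps Heps.
  destruct (Hcont 0 eps Heps) as [del [Hdel Hphi]].
  destruct (fixed_points_uniformly_small L c gamma x Hc Hg Hfp del Hdel) as [N0 HN0].
  exists N0. intros N i HN Hi.
  destruct (Req_dec (x N i) 0) as [Hzero | Hnz].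
  - rewrite Hzero, Rminus_diag, Rabs_R0. exact Heps.
  - apply Hphi. split.
    + split; [exact I | congruence].
    + simpl. unfold R_dist. rewrite Rminus_0_r. apply HN0; assumption.
Qed.
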